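(* Let $p$ be a fixed point in $\mathbb{S}_1^3$ and $\gamma=\gamma(t)$ a timelike unit speed curve in $\mathbb{S}_1^2\subset T_p\mathbb{S}_1^3$ with geodesic curvature $\kappa_\gamma$. For any nonzero function $\eta(t)$, let $\alpha(t)=\exp_p(\eta(t)\gamma(t))=\cos(\eta(t))p+\sin(\eta(t))\gamma(t)$ be a timelike regular curve in $\mathbb{S}_1^3$ with geodesic curvature $\kappa_g$. Then $$\kappa_\gamma^2\le\frac{\|\alpha'\|^4\kappa_g^2}{\sin^2(\eta)},$$ with equality holding identically if and only if $\alpha$ is a timelike rectifying curve in $\mathbb{S}_1^3$.
   Context: Minkowski 4-space $\mathbb{R}_1^4$ is $\mathbb{R}^4$ with $\langle x,y\rangle=-x_1y_1+x_2y_2+x_3y_3+x_4y_4$, $\|x\|=\sqrt{|\langle x,x\rangle|}$; $\alpha'=d\alpha/dt$. De Sitter 3-space $\mathbb{S}_1^3=\{x:\langle x,x\rangle=1\}$. $\mathbb{S}_1^2\subset T_p\mathbb{S}_1^3$ is $\{w:\langle w,p\rangle=0,\langle w,w\rangle=1\}$. For a timelike unit speed curve $\gamma$ in this $\mathbb{S}_1^2$, its geodesic curvature is $\kappa_\gamma=\det(\gamma,\gamma',\gamma'',p)$, and $\gamma''=\gamma+\kappa_\gamma N_\gamma$ with $N_\gamma=p\times\gamma\times\gamma'$ (formal determinant with first row $(-e_1,e_2,e_3,e_4)$). For a timelike curve $\alpha$ in $\mathbb{S}_1^3$ with arc length $s$: $T_\alpha=d\alpha/ds$, $\kappa_g=\|dT_\alpha/ds-\alpha\|$,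 $N_\alpha=(dT_\alpha/ds-\alpha)/\kappa_g$. Throughout, curves are assumed non-geodesic ($\kappa_g>0$) and non-planar (geodesic torsion $\neq0$). $\alpha$ is a timelike rectifying curve (with respect to $p\notin\mathrm{Im}(\alpha)$) if at each point $\alpha(s)$ the tangent vector of the geodesic of $\mathbb{S}_1^3$ joining $p$ and $\alpha(s)$ is pseudo-orthogonal to $N_\alpha(s)$. *)

From Stdlib Require Import Reals.
From Coquelicot Require Import Coquelicot.
Open Scope R_scope.

Record V4 := mkV4 { v1 : R; v2 : R; v3 : R; v4 : R }.

Definition vadd (x y : V4) : V4 :=
  mkV4 (v1 x + v1 y) (v2 x + v2 y) (v3 x + v3 y) (v4 x + v4 y).
Definition vscale (k : R) (x : V4) : V4 :=
  mkV4 (k * v1 x) (k * v2 x) (k * v3 x) (k * v4 x).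
Definition vsub (x y : V4) : V4 := vadd x (vscale (-1) y).

Definition mdot (x y : V4) : R :=
  - v1 x * v1 y + v2 x * v2 y + v3 x * v3 y + v4 x * v4 y.
Definition mnorm (x : V4) : R := sqrt (Rabs (mdot x x)).

Definition det3 (a11 a12 a13 a21 a22 a23 a31 a32 a33 : R) : R :=
  a11 * (a22 * a33 - a23 * a32) - a12 * (a21 * a33 - a23 * a31)
  + a13 * (a21 * a32 - a22 * a31).
Definition det4 (x y z w : V4) : R :=
  v1 x * det3 (v2 y) (v3 y) (v4 y) (v2 z) (v3 z) (v4 z) (v2 w) (v3 w) (v4 w)
  - v2 x * det3 (v1 y) (v3 y) (v4 y) (v1 z) (v3 z) (v4 z) (v1 w) (v3 w) (v4 w)
  + v3 x * det3 (v1 y) (v2 y) (v4 y) (v1 z) (v2 z) (v4 z) (v1 w) (v2 w) (v4 w)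
  - v4 x * det3 (v1 y) (v2 y) (v3 y) (v1 z) (v2 z) (v3 z) (v1 w) (v2 w) (v3 w).

Definition dv (c : R -> V4) (t : R) : V4 :=
  mkV4 (Derive (fun u => v1 (c u)) t) (Derive (fun u => v2 (c u)) t)
       (Derive (fun u => v3 (c u)) t) (Derive (fun u => v4 (c u)) t).

Definition twice_diff_at (f : R -> R) (t : R) : Prop :=
  ex_derive f t /\ ex_derive (Derive f) t.

Definition curve_twice_diff_at (c : R -> V4) (t : R) : Prop :=
  twice_diff_at (fun u => v1 (c u)) t /\ twice_diff_at (fun u => v2 (c u)) t /\
  twice_diff_at (fun u => v3 (c u)) t /\ twice_diff_at (fun u => v4 (c u)) t.

(* geodesic curvature of a curve gamma in S^2_1 ⊂ T_p S^3_1: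
   kappa_gamma = det(gamma, gamma', gamma'', p) *)
Definition kappa_gamma (p : V4) (gam : R -> V4) (t : R) : R :=
  det4 (gam t) (dv gam t) (dv (dv gam) t) p.

(* u |-> exp_p(u q) = cos u p + sin u q, for q a unit spacelike vector
   tangent at p: the geodesic of S^3_1 starting at p in direction q. *)
Definition geod (p q : V4) (u : R) : V4 := vadd (vscale (cos u) p) (vscale (sin u) q).

Definition alpha (p : V4) (gam : R -> V4) (eta : R -> R) (t : R) : V4 :=
  geod p (gam t) (eta t).

(* Frenet data of a (timelike) curve c of S^3_1, w.r.t. arc length s:
   T = dc/ds = c'/||c'||,  dT/ds = (dT/dt)/||c'||,
   kappa_g = || dT/ds - c ||,  N = (dT/ds - c)/kappa_g. *)
Definition T_of (c : R -> V4) (t : R) : V4 := vscale (/ mnorm (dv c t)) (dv c t).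
Definition dTds (c : R -> V4) (t : R) : V4 := vscale (/ mnorm (dv c t)) (dv (T_of c) t).
Definition kappa_g (c : R -> V4) (t : R) : R := mnorm (vsub (dTds c t) (c t)).
Definition N_of (c : R -> V4) (t : R) : V4 :=
  vscale (/ kappa_g c t) (vsub (dTds c t) (c t)).

(* alpha is a timelike rectifying curve w.r.t. p on the open interval (a,b):
   at each alpha(t), the tangent vector of the geodesic u |-> exp_p(u gamma(t))
   joining p (u = 0) and alpha(t) (u = eta(t)), taken at alpha(t), is
   pseudo-orthogonal to N_alpha(t). *)
Definition is_rectifying (p : V4) (gam : R -> V4) (eta : R -> R) (a b : R) : Prop :=
  forall t, a < t < b ->
    mdot (dv (geod p (gam t)) (eta t)) (N_of (alpha p gam eta) t) = 0.

(* Work at alpha(t) in the frame (alpha, P, gamma', K), where P is the tangent at alpha(t)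
   of the geodesic from p through alpha(t) and K = gamma'' - gamma = kappa_gamma N_gamma.
   It is orthogonal with squared norms 1, 1, -1, kappa_gamma^2.  There
   alpha' = eta' P + sin(eta) gamma', so n^2 := -<alpha', alpha'> = sin^2(eta) - eta'^2, and
   the vector X = dT/ds - alpha = kappa_g N_alpha has no alpha-component and is orthogonal
   to alpha'.  The latter ties its gamma'-coordinate to its P-coordinate and yields
     n^4 kappa_g^2 / sin^2(eta) = kappa_gamma^2 + (n^3 <P, X> / sin^2(eta))^2,
   so the inequality holds, with equality exactly where <P, N_alpha> = 0. *)

From Stdlib Require Import Reals Lra.
From Coquelicot Require Import Coquelicot.
Open Scope R_scope.

Lemma V4_ext (x y : V4) :
  v1 x = v1 y -> v2 x = v2 y -> v3 x = v3 y -> v4 x = v4 y -> x = y.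
Proof. destruct x, y; simpl; intros -> -> -> ->; reflexivity. Qed.

Ltac V4_ring := apply V4_ext; simpl; ring.

Lemma mdot_sym (x y : V4) : mdot x y = mdot y x.
Proof. unfold mdot; ring. Qed.

Lemma mdot_addl (x y z : V4) : mdot (vadd x y) z = mdot x z + mdot y z.
Proof. unfold mdot; simpl; ring. Qed.

Lemma mdot_addr (x y z : V4) : mdot x (vadd y z) = mdot x y + mdot x z.
Proof. unfold mdot; simpl; ring. Qed.

Lemma mdot_scalel (c : R) (x y : V4) : mdot (vscale c x) y = c * mdot x y.
Proof. unfold mdot; simpl; ring. Qed.

Lemma mdot_scaler (c : R) (x y : V4) : mdot x (vscale c y) = c * mdot x y.
Proof. unfold mdot; simpl; ring. Qed.

Lemma mdot_zero_r (x : V4) : mdot x (mkV4 0 0 0 0) = 0.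
Proof. unfold mdot; simpl; ring. Qed.

Lemma mnorm_timelike (x : V4) : mdot x x < 0 -> mnorm x = sqrt (- mdot x x).
Proof. intros H; unfold mnorm; rewrite Rabs_left; auto. Qed.

Lemma mnorm_pos_timelike (x : V4) : mdot x x < 0 -> 0 < mnorm x.
Proof. intros H; rewrite mnorm_timelike by exact H; apply sqrt_lt_R0; lra. Qed.

Lemma mnorm_sq_timelike (x : V4) : mdot x x < 0 -> mnorm x ^ 2 = - mdot x x.
Proof. intros H; rewrite mnorm_timelike, pow2_sqrt; lra. Qed.

Definition comb4 (u1 u2 u3 u4 : V4) (c1 c2 c3 c4 : R) : V4 :=
  vadd (vadd (vadd (vscale c1 u1) (vscale c2 u2)) (vscale c3 u3)) (vscale c4 u4).

Lemma mdot_comb4_orthogonal (u1 u2 u3 u4 : V4) (c1 c2 c3 c4 d1 d2 d3 d4 : R) :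
  mdot u1 u2 = 0 -> mdot u1 u3 = 0 -> mdot u1 u4 = 0 ->
  mdot u2 u3 = 0 -> mdot u2 u4 = 0 -> mdot u3 u4 = 0 ->
  mdot (comb4 u1 u2 u3 u4 c1 c2 c3 c4) (comb4 u1 u2 u3 u4 d1 d2 d3 d4) =
  c1 * d1 * mdot u1 u1 + c2 * d2 * mdot u2 u2 +
  c3 * d3 * mdot u3 u3 + c4 * d4 * mdot u4 u4.
Proof.
  intros H12 H13 H14 H23 H24 H34. unfold comb4.
  rewrite !mdot_addl, !mdot_addr, !mdot_scalel, !mdot_scaler.
  rewrite (mdot_sym u2 u1), (mdot_sym u3 u1), (mdot_sym u4 u1),
    (mdot_sym u3 u2), (mdot_sym u4 u2), (mdot_sym u4 u3),
    H12, H13, H14, H23, H24, H34.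
  ring.
Qed.

(* The Gram matrix is [M diag(-1,1,1,1) M^T], where [M] has rows [x, y, z, w]. *)
Lemma det4_sq_gram (x y z w : V4) :
  det4 x y z w ^ 2 =
  - det4 (mkV4 (mdot x x) (mdot x y) (mdot x z) (mdot x w))
         (mkV4 (mdot y x) (mdot y y) (mdot y z) (mdot y w))
         (mkV4 (mdot z x) (mdot z y) (mdot z z) (mdot z w))
         (mkV4 (mdot w x) (mdot w y) (mdot w z) (mdot w w)).
Proof. destruct x, y, z, w; unfold det4, det3, mdot; simpl; ring. Qed.

Lemma det4_sq_orthogonal (x y z w : V4) :
  mdot x y = 0 -> mdot x z = 0 -> mdot x w = 0 ->
  mdot y z = 0 -> mdot y w = 0 -> mdot z w = 0 ->
  det4 x y z w ^ 2 = - (mdot x x * mdot y y * mdot z z * mdot w w).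
Proof.
  intros Hxy Hxz Hxw Hyz Hyw Hzw. rewrite det4_sq_gram.
  rewrite (mdot_sym y x), (mdot_sym z x), (mdot_sym w x),
    (mdot_sym z y), (mdot_sym w y), (mdot_sym w z),
    Hxy, Hxz, Hxw, Hyz, Hyw, Hzw.
  unfold det4, det3; simpl; ring.
Qed.

Lemma det4_sub_row13 (x y z w : V4) : det4 x y (vsub z x) w = det4 x y z w.
Proof. unfold det4, det3; simpl; ring. Qed.

(** * Geodesics through a point of de Sitter space *)

Definition geod_tangent (p q : V4) (u : R) : V4 :=
  vadd (vscale (- sin u) p) (vscale (cos u) q).

Lemma sin_cos_mix (u x : R) : sin u * (sin u * x) + cos u * (cos u * x) = x.
Proof.
  transitivity ((sin u ^ 2 + cos u ^ 2) * x); [ring|].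
  rewrite <- !Rsqr_pow2, sin2_cos2; ring.
Qed.

Lemma geod_rotation (p q : V4) (u : R) :
  q = vadd (vscale (sin u) (geod p q u)) (vscale (cos u) (geod_tangent p q u)).
Proof.
  apply V4_ext; simpl; rewrite <- (sin_cos_mix u) at 1; ring.
Qed.

Section Geodesic.
Variables (p q : V4) (u : R).
Hypotheses (Hpp : mdot p p = 1) (Hqq : mdot q q = 1) (Hqp : mdot q p = 0).

Lemma mdot_geod_geod : mdot (geod p q u) (geod p q u) = 1.
Proof.
  unfold geod; rewrite !mdot_addl, !mdot_addr, !mdot_scalel, !mdot_scaler.
  rewrite (mdot_sym p q), Hpp, Hqq, Hqp; generalize (sin_cos_mix u 1); lra.
Qed.

Lemma mdot_tangent_tangent : mdot (geod_tangent p q u) (geod_tangent p q u) = 1.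
Proof.
  unfold geod_tangent; rewrite !mdot_addl, !mdot_addr, !mdot_scalel, !mdot_scaler.
  rewrite (mdot_sym p q), Hpp, Hqq, Hqp; generalize (sin_cos_mix u 1); lra.
Qed.

Lemma mdot_geod_tangent : mdot (geod p q u) (geod_tangent p q u) = 0.
Proof.
  unfold geod, geod_tangent; rewrite !mdot_addl, !mdot_addr, !mdot_scalel, !mdot_scaler.
  rewrite (mdot_sym p q), Hpp, Hqq, Hqp; ring.
Qed.

End Geodesic.

Lemma mdot_geod_orth (p q w : V4) (u : R) :
  mdot p w = 0 -> mdot q w = 0 -> mdot (geod p q u) w = 0.
Proof. intros Hp Hq; unfold geod; rewrite mdot_addl, !mdot_scalel, Hp, Hq; ring. Qed.

Lemma mdot_tangent_orth (p q w : V4) (u : R) :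
  mdot p w = 0 -> mdot q w = 0 -> mdot (geod_tangent p q u) w = 0.
Proof. intros Hp Hq; unfold geod_tangent; rewrite mdot_addl, !mdot_scalel, Hp, Hq; ring. Qed.

Lemma is_derive_eq (f : R -> R) (t l l' : R) : is_derive f t l -> l = l' -> is_derive f t l'.
Proof. intros H <-; exact H. Qed.

Lemma is_derive_Rplus (f g : R -> R) (t df dg : R) :
  is_derive f t df -> is_derive g t dg -> is_derive (fun u => f u + g u) t (df + dg).
Proof. exact (is_derive_plus f g t df dg). Qed.

Lemma is_derive_Ropp (f : R -> R) (t df : R) :
  is_derive f t df -> is_derive (fun u => - f u) t (- df).
Proof. exact (is_derive_opp f t df). Qed.

Lemma is_derive_Rmult (f g : R -> R) (t df dg : R) :
  is_derive f t df -> is_derive g t dg ->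
  is_derive (fun u => f u * g u) t (df * g t + f t * dg).
Proof. intros Hf Hg; apply (is_derive_mult f g); [exact Hf | exact Hg | apply Rmult_comm]. Qed.

Lemma is_derive_cos_comp (h : R -> R) (t dh : R) :
  is_derive h t dh -> is_derive (fun u => cos (h u)) t (- sin (h t) * dh).
Proof.
  intros Hh; eapply is_derive_eq; [exact (is_derive_comp cos h t _ _ (is_derive_cos (h t)) Hh)|].
  cbn; unfold mult; simpl; ring.
Qed.

Lemma is_derive_sin_comp (h : R -> R) (t dh : R) :
  is_derive h t dh -> is_derive (fun u => sin (h u)) t (cos (h t) * dh).
Proof.
  intros Hh; eapply is_derive_eq; [exact (is_derive_comp sin h t _ _ (is_derive_sin (h t)) Hh)|].
  cbn; unfold mult; simpl; ring.
Qed.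

Lemma locally_of_interval (P : R -> Prop) (a b t : R) :
  (forall u, a < u < b -> P u) -> a < t < b -> locally t P.
Proof.
  intros HP Ht; apply (filter_imp (fun u => a < u < b)); [exact HP|].
  exact (open_and _ _ (open_gt a) (open_lt b) t Ht).
Qed.

Definition is_vderive (c : R -> V4) (t : R) (d : V4) : Prop :=
  is_derive (fun u => v1 (c u)) t (v1 d) /\ is_derive (fun u => v2 (c u)) t (v2 d) /\
  is_derive (fun u => v3 (c u)) t (v3 d) /\ is_derive (fun u => v4 (c u)) t (v4 d).

Lemma is_vderive_dv (c : R -> V4) (t : R) (d : V4) : is_vderive c t d -> dv c t = d.
Proof.
  intros (D1 & D2 & D3 & D4).
  apply V4_ext; simpl; apply is_derive_unique; assumption.
Qed.

Lemma ex_derive_is_vderive (c : R -> V4) (t : R) :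
  ex_derive (fun u => v1 (c u)) t -> ex_derive (fun u => v2 (c u)) t ->
  ex_derive (fun u => v3 (c u)) t -> ex_derive (fun u => v4 (c u)) t ->
  is_vderive c t (dv c t).
Proof. intros; split; [|split; [|split]]; apply Derive_correct; assumption. Qed.

Lemma is_vderive_ext_loc (c c' : R -> V4) (t : R) (d : V4) :
  locally t (fun u => c u = c' u) -> is_vderive c t d -> is_vderive c' t d.
Proof.
  intros Hloc (D1 & D2 & D3 & D4).
  assert (E : forall f : V4 -> R, locally t (fun u => f (c u) = f (c' u))).
  { intros f; apply (filter_imp _ _ (fun u (Hu : c u = c' u) => f_equal f Hu) Hloc). }
  split; [|split; [|split]]; [ exact (is_derive_ext_loc _ _ _ _ (E v1) D1)
                | exact (is_derive_ext_loc _ _ _ _ (E v2) D2)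
                | exact (is_derive_ext_loc _ _ _ _ (E v3) D3)
                | exact (is_derive_ext_loc _ _ _ _ (E v4) D4) ].
Qed.

Lemma is_vderive_eq (c : R -> V4) (t : R) (d d' : V4) :
  is_vderive c t d -> d = d' -> is_vderive c t d'.
Proof. intros H <-; exact H. Qed.

Lemma is_vderive_const (x : V4) (t : R) : is_vderive (fun _ => x) t (mkV4 0 0 0 0).
Proof.
  split; [|split; [|split]]; [ apply (is_derive_const (v1 x)) | apply (is_derive_const (v2 x))
                             | apply (is_derive_const (v3 x)) | apply (is_derive_const (v4 x)) ].
Qed.

Lemma is_vderive_add (c c' : R -> V4) (t : R) (d d' : V4) :
  is_vderive c t d -> is_vderive c' t d' ->
  is_vderive (fun u => vadd (c u) (c' u)) t (vadd d d').
Proof.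
  intros (D1 & D2 & D3 & D4) (D1' & D2' & D3' & D4').
  split; [|split; [|split]]; cbn [v1 v2 v3 v4 vadd];
    apply (is_derive_plus (V := R_NormedModule)); assumption.
Qed.

Lemma is_vderive_scale (f : R -> R) (c : R -> V4) (t df : R) (d : V4) :
  is_derive f t df -> is_vderive c t d ->
  is_vderive (fun u => vscale (f u) (c u)) t (vadd (vscale df (c t)) (vscale (f t) d)).
Proof.
  intros Hf (D1 & D2 & D3 & D4).
  split; [|split; [|split]]; cbn [v1 v2 v3 v4 vadd vscale]; apply is_derive_Rmult; assumption.
Qed.

Lemma is_derive_mdot (x y : R -> V4) (t : R) (dx dy : V4) :
  is_vderive x t dx -> is_vderive y t dy ->
  is_derive (fun u => mdot (x u) (y u)) t (mdot dx (y t) + mdot (x t) dy).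
Proof.
  intros (X1 & X2 & X3 & X4) (Y1 & Y2 & Y3 & Y4).
  unfold mdot; eapply is_derive_eq.
  - apply is_derive_Rplus; [apply is_derive_Rplus; [apply is_derive_Rplus|]|].
    + apply is_derive_Rmult; [apply is_derive_Ropp, X1 | exact Y1].
    + apply is_derive_Rmult; [exact X2 | exact Y2].
    + apply is_derive_Rmult; [exact X3 | exact Y3].
    + apply is_derive_Rmult; [exact X4 | exact Y4].
  - cbv beta; ring.
Qed.

Lemma mdot_deriv_of_const (x y : R -> V4) (t k : R) (dx dy : V4) :
  locally t (fun u => mdot (x u) (y u) = k) -> is_vderive x t dx -> is_vderive y t dy ->
  mdot dx (y t) + mdot (x t) dy = 0.
Proof.
  intros Hk Hx Hy.
  assert (H : is_derive (fun _ => k) t (mdot dx (y t) + mdot (x t) dy))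
    by exact (is_derive_ext_loc _ _ _ _ Hk (is_derive_mdot _ _ _ _ _ Hx Hy)).
  apply is_derive_unique in H; rewrite Derive_const in H; auto.
Qed.

Lemma is_vderive_geod (p : V4) (g : R -> V4) (h : R -> R) (t : R) (dg : V4) (dh : R) :
  is_vderive g t dg -> is_derive h t dh ->
  is_vderive (fun u => geod p (g u) (h u)) t
    (vadd (vscale dh (geod_tangent p (g t) (h t))) (vscale (sin (h t)) dg)).
Proof.
  intros Hg Hh; unfold geod; eapply is_vderive_eq.
  - apply is_vderive_add; apply is_vderive_scale;
      [apply is_derive_cos_comp, Hh | apply is_vderive_const
      | apply is_derive_sin_comp, Hh | exact Hg].
  - unfold geod_tangent; V4_ring.
Qed.

Lemma is_vderive_geod_tangent (p : V4) (g : R -> V4) (h : R -> R) (t : R) (dg : V4) (dh : R) :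
  is_vderive g t dg -> is_derive h t dh ->
  is_vderive (fun u => geod_tangent p (g u) (h u)) t
    (vadd (vscale (- dh) (geod p (g t) (h t))) (vscale (cos (h t)) dg)).
Proof.
  intros Hg Hh; unfold geod_tangent; eapply is_vderive_eq.
  - apply is_vderive_add; apply is_vderive_scale;
      [apply is_derive_Ropp, is_derive_sin_comp, Hh | apply is_vderive_const
      | apply is_derive_cos_comp, Hh | exact Hg].
  - unfold geod; V4_ring.
Qed.

Lemma dv_geod (p q : V4) (u : R) : dv (geod p q) u = geod_tangent p q u.
Proof.
  apply is_vderive_dv; eapply is_vderive_eq.
  - apply (is_vderive_geod p (fun _ => q) (fun w => w) u (mkV4 0 0 0 0) 1);
      [apply is_vderive_const | exact (is_derive_id (K := R_AbsRing) u)].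
  - V4_ring.
Qed.

Lemma is_derive_inv_mnorm (c : R -> V4) (t : R) (dc : V4) :
  locally t (fun u => mdot (c u) (c u) < 0) -> is_vderive c t dc ->
  is_derive (fun u => / mnorm (c u)) t (mdot (c t) dc / mnorm (c t) ^ 3).
Proof.
  intros Hloc Hc; pose proof (locally_singleton _ _ Hloc) as Ht; simpl in Ht.
  assert (Hsq : 0 < sqrt (- mdot (c t) (c t))) by (apply sqrt_lt_R0; lra).
  apply (is_derive_ext_loc (fun u => / sqrt (- mdot (c u) (c u)))).
  { apply (filter_imp _ _ (fun u Hu => f_equal Rinv (eq_sym (mnorm_timelike _ Hu))) Hloc). }
  eapply is_derive_eq.
  - apply is_derive_inv; [|lra].
    apply is_derive_sqrt; [apply is_derive_Ropp, is_derive_mdot; exact Hc | lra].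
  - rewrite (mnorm_timelike _ Ht), (mdot_sym dc); field; lra.
Qed.

Lemma dTds_timelike (c : R -> V4) (t : R) (c2 : V4) :
  locally t (fun u => mdot (dv c u) (dv c u) < 0) -> is_vderive (dv c) t c2 ->
  dTds c t = vadd (vscale (mdot (dv c t) c2 / mnorm (dv c t) ^ 4) (dv c t))
                  (vscale (/ mnorm (dv c t) ^ 2) c2).
Proof.
  intros Hloc Hc2.
  assert (Hn := mnorm_pos_timelike _ (locally_singleton _ _ Hloc)).
  unfold dTds; rewrite (is_vderive_dv (T_of c) t _ (is_vderive_scale _ _ _ _ _
    (is_derive_inv_mnorm _ _ _ Hloc Hc2) Hc2)).
  apply V4_ext; simpl; field; lra.
Qed.

(** * Curves of the form exp_p (eta gamma) *)

Lemma le_add_sq_scaled (x c z : R) :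
  c <> 0 -> x <= x + (c * z) ^ 2 /\ (x = x + (c * z) ^ 2 <-> z = 0).
Proof.
  intros Hc; split; [pose proof (pow2_ge_0 (c * z)); lra|].
  split; [|intros ->; ring].
  intros H; destruct (Req_dec (c * z) 0) as [Hcz | Hcz].
  - destruct (Rmult_integral _ _ Hcz); [contradiction | assumption].
  - exfalso; apply (pow_nonzero _ 2 Hcz); lra.
Qed.

Section RectifyingCurve.

Variables (p : V4) (gam : R -> V4) (eta : R -> R) (a b : R).
Hypothesis Hpp : mdot p p = 1.
Hypothesis Hgam : forall t, a < t < b ->
  mdot (gam t) p = 0 /\ mdot (gam t) (gam t) = 1 /\ mdot (dv gam t) (dv gam t) = -1.
Hypothesis Hdiff : forall t, a < t < b -> curve_twice_diff_at gam t /\ twice_diff_at eta t.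

Lemma is_vderive_gam (t : R) : a < t < b -> is_vderive gam t (dv gam t).
Proof.
  intros Ht; destruct (Hdiff t Ht) as [((D1 & _) & (D2 & _) & (D3 & _) & (D4 & _)) _].
  apply ex_derive_is_vderive; assumption.
Qed.

Lemma is_vderive_dgam (t : R) : a < t < b -> is_vderive (dv gam) t (dv (dv gam) t).
Proof.
  intros Ht; destruct (Hdiff t Ht) as [((_ & D1) & (_ & D2) & (_ & D3) & (_ & D4)) _].
  apply ex_derive_is_vderive; assumption.
Qed.

Lemma is_derive_eta (t : R) : a < t < b -> is_derive eta t (Derive eta t).
Proof. intros Ht; apply Derive_correct, (Hdiff t Ht). Qed.

Lemma is_derive_deta (t : R) : a < t < b -> is_derive (Derive eta) t (Derive (Derive eta) t).
Proof. intros Ht; apply Derive_correct, (Hdiff t Ht). Qed.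

Lemma mdot_dgam_p (t : R) : a < t < b -> mdot (dv gam t) p = 0.
Proof.
  intros Ht.
  assert (H := mdot_deriv_of_const gam (fun _ => p) t 0 _ _
    (locally_of_interval _ a b t (fun u Hu => proj1 (Hgam u Hu)) Ht)
    (is_vderive_gam t Ht) (is_vderive_const p t)).
  rewrite mdot_zero_r in H; lra.
Qed.

Lemma mdot_gam_dgam (t : R) : a < t < b -> mdot (gam t) (dv gam t) = 0.
Proof.
  intros Ht.
  assert (H := mdot_deriv_of_const gam gam t 1 _ _
    (locally_of_interval _ a b t (fun u Hu => proj1 (proj2 (Hgam u Hu))) Ht)
    (is_vderive_gam t Ht) (is_vderive_gam t Ht)).
  rewrite mdot_sym in H; lra.
Qed.

Lemma mdot_ddgam_p (t : R) : a < t < b -> mdot (dv (dv gam) t) p = 0.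
Proof.
  intros Ht.
  assert (H := mdot_deriv_of_const (dv gam) (fun _ => p) t 0 _ _
    (locally_of_interval _ a b t mdot_dgam_p Ht)
    (is_vderive_dgam t Ht) (is_vderive_const p t)).
  rewrite mdot_zero_r in H; lra.
Qed.

Lemma mdot_gam_ddgam (t : R) : a < t < b -> mdot (gam t) (dv (dv gam) t) = 1.
Proof.
  intros Ht.
  assert (H := mdot_deriv_of_const gam (dv gam) t 0 _ _
    (locally_of_interval _ a b t mdot_gam_dgam Ht)
    (is_vderive_gam t Ht) (is_vderive_dgam t Ht)).
  destruct (Hgam t Ht) as (_ & _ & H11); lra.
Qed.

Lemma mdot_dgam_ddgam (t : R) : a < t < b -> mdot (dv gam t) (dv (dv gam) t) = 0.
Proof.
  intros Ht.
  assert (H := mdot_deriv_of_const (dv gam) (dv gam) t (-1) _ _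
    (locally_of_interval _ a b t (fun u Hu => proj2 (proj2 (Hgam u Hu))) Ht)
    (is_vderive_dgam t Ht) (is_vderive_dgam t Ht)).
  rewrite mdot_sym in H; lra.
Qed.

Definition curvature_vector (t : R) : V4 := vsub (dv (dv gam) t) (gam t).

Lemma mdot_curvature_vector_p (t : R) : a < t < b -> mdot (curvature_vector t) p = 0.
Proof.
  intros Ht; unfold curvature_vector, vsub.
  rewrite mdot_addl, mdot_scalel, mdot_ddgam_p, (proj1 (Hgam t Ht)) by exact Ht; ring.
Qed.

Lemma mdot_gam_curvature_vector (t : R) : a < t < b -> mdot (gam t) (curvature_vector t) = 0.
Proof.
  intros Ht; unfold curvature_vector, vsub.
  rewrite mdot_addr, mdot_scaler, mdot_gam_ddgam, (proj1 (proj2 (Hgam t Ht))) by exact Ht; ring.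
Qed.

Lemma mdot_dgam_curvature_vector (t : R) : a < t < b -> mdot (dv gam t) (curvature_vector t) = 0.
Proof.
  intros Ht; unfold curvature_vector, vsub.
  rewrite mdot_addr, mdot_scaler, mdot_dgam_ddgam, (mdot_sym _ (gam t)), mdot_gam_dgam
    by exact Ht; ring.
Qed.

Lemma kappa_gamma_sq (t : R) : a < t < b ->
  kappa_gamma p gam t ^ 2 = mdot (curvature_vector t) (curvature_vector t).
Proof.
  intros Ht; destruct (Hgam t Ht) as (H0p & H00 & H11).
  unfold kappa_gamma; rewrite <- det4_sub_row13; fold (curvature_vector t).
  rewrite det4_sq_orthogonal, H00, H11, Hpp; [ring | ..].
  all: first [ apply mdot_gam_dgam | apply mdot_gam_curvature_vector | exact H0p
             | apply mdot_dgam_curvature_vector | apply mdot_dgam_p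
             | apply mdot_curvature_vector_p ]; exact Ht.
Qed.

Definition radial_tangent (t : R) : V4 := geod_tangent p (gam t) (eta t).

Definition alpha_frame (t : R) : R -> R -> R -> R -> V4 :=
  comb4 (alpha p gam eta t) (radial_tangent t) (dv gam t) (curvature_vector t).

Lemma mdot_alpha_frame (t c1 c2 c3 c4 d1 d2 d3 d4 : R) : a < t < b ->
  mdot (alpha_frame t c1 c2 c3 c4) (alpha_frame t d1 d2 d3 d4) =
  c1 * d1 + c2 * d2 - c3 * d3 +
  c4 * d4 * mdot (curvature_vector t) (curvature_vector t).
Proof.
  intros Ht; destruct (Hgam t Ht) as (H0p & H00 & H11).
  assert (Hp1 : mdot p (dv gam t) = 0) by (rewrite mdot_sym; apply mdot_dgam_p, Ht).
  assert (HpK : mdot p (curvature_vector t) = 0)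
    by (rewrite mdot_sym; apply mdot_curvature_vector_p, Ht).
  assert (H0K := mdot_gam_curvature_vector t Ht).
  assert (H01 := mdot_gam_dgam t Ht).
  unfold alpha_frame, radial_tangent, alpha.
  rewrite mdot_comb4_orthogonal, mdot_geod_geod, mdot_tangent_tangent, H11; auto.
  - ring.
  - apply mdot_geod_tangent; assumption.
  - apply mdot_geod_orth; assumption.
  - apply mdot_geod_orth; assumption.
  - apply mdot_tangent_orth; assumption.
  - apply mdot_tangent_orth; assumption.
  - apply mdot_dgam_curvature_vector, Ht.
Qed.

Lemma dv_alpha (t : R) : a < t < b ->
  dv (alpha p gam eta) t =
  vadd (vscale (Derive eta t) (radial_tangent t)) (vscale (sin (eta t)) (dv gam t)).
Proof.
  intros Ht; apply is_vderive_dv, is_vderive_geod; [apply is_vderive_gam | apply is_derive_eta];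
    exact Ht.
Qed.

Lemma dv_alpha_frame (t : R) : a < t < b ->
  dv (alpha p gam eta) t = alpha_frame t 0 (Derive eta t) (sin (eta t)) 0.
Proof. intros Ht; rewrite dv_alpha by exact Ht; unfold alpha_frame, comb4; V4_ring. Qed.

Lemma ddgam_alpha_frame (t : R) :
  dv (dv gam) t = alpha_frame t (sin (eta t)) (cos (eta t)) 0 1.
Proof.
  transitivity (vadd (curvature_vector t) (gam t)); [unfold curvature_vector; V4_ring|].
  rewrite (geod_rotation p (gam t) (eta t)) at 1.
  unfold alpha_frame, comb4, radial_tangent, alpha; V4_ring.
Qed.

Lemma is_vderive_dalpha (t : R) : a < t < b ->
  let s := sin (eta t) in let co := cos (eta t) in
  let e1 := Derive eta t in let e2 := Derive (Derive eta) t in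
  is_vderive (dv (alpha p gam eta)) t
    (alpha_frame t (s ^ 2 - e1 ^ 2) (e2 + s * co) (2 * co * e1) s).
Proof.
  intros Ht s co e1 e2.
  apply (is_vderive_ext_loc
    (fun u => vadd (vscale (Derive eta u) (radial_tangent u)) (vscale (sin (eta u)) (dv gam u)))).
  { apply (locally_of_interval _ a b t); [|exact Ht].
    intros u Hu; symmetry; apply dv_alpha, Hu. }
  eapply is_vderive_eq.
  - apply is_vderive_add; apply is_vderive_scale.
    + apply is_derive_deta, Ht.
    + apply is_vderive_geod_tangent; [apply is_vderive_gam | apply is_derive_eta]; exact Ht.
    + apply is_derive_sin_comp, is_derive_eta, Ht.
    + apply is_vderive_dgam, Ht.
  - rewrite ddgam_alpha_frame; unfold alpha_frame, comb4, radial_tangent, alpha.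
    generalize (geod p (gam t) (eta t)) (geod_tangent p (gam t) (eta t)) (dv gam t)
      (curvature_vector t); intros; subst s co e1 e2; V4_ring.
Qed.

Hypothesis Htimelike : forall t, a < t < b ->
  mdot (dv (alpha p gam eta) t) (dv (alpha p gam eta) t) < 0.

Lemma mnorm_dalpha_sq (t : R) : a < t < b ->
  mnorm (dv (alpha p gam eta) t) ^ 2 = sin (eta t) ^ 2 - Derive eta t ^ 2.
Proof.
  intros Ht; rewrite mnorm_sq_timelike, dv_alpha_frame, mdot_alpha_frame by auto; ring.
Qed.

Lemma sin_eta_neq0 (t : R) : a < t < b -> sin (eta t) <> 0.
Proof.
  intros Ht Hs; pose proof (mnorm_pos_timelike _ (Htimelike t Ht)) as Hn.
  pose proof (mnorm_dalpha_sq t Ht) as Hn2; rewrite Hs in Hn2; nra.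
Qed.

(* Here [v = |alpha'|^2] and [m = <alpha', alpha''>]. *)
Lemma dTds_sub_alpha (t : R) : a < t < b ->
  let s := sin (eta t) in let co := cos (eta t) in
  let e1 := Derive eta t in let e2 := Derive (Derive eta) t in
  let v := s ^ 2 - e1 ^ 2 in
  let m := e1 * (e2 + s * co) - s * (2 * co * e1) in
  vsub (dTds (alpha p gam eta) t) (alpha p gam eta t) =
  alpha_frame t 0 (m / v ^ 2 * e1 + (e2 + s * co) / v) (m / v ^ 2 * s + 2 * co * e1 / v) (s / v).
Proof.
  intros Ht s co e1 e2 v m.
  assert (Hn2 : mnorm (dv (alpha p gam eta) t) ^ 2 = v) by exact (mnorm_dalpha_sq t Ht).
  assert (Hv : v <> 0) by (pose proof (mnorm_pos_timelike _ (Htimelike t Ht)); nra).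
  rewrite (dTds_timelike _ _ _ (locally_of_interval _ a b t Htimelike Ht)
    (is_vderive_dalpha t Ht)).
  replace (mnorm (dv (alpha p gam eta) t) ^ 4) with (v ^ 2) by (rewrite <- Hn2; ring).
  rewrite Hn2, dv_alpha_frame, mdot_alpha_frame by exact Ht.
  unfold alpha_frame, comb4, alpha.
  generalize (geod p (gam t) (eta t)) (radial_tangent t) (dv gam t) (curvature_vector t).
  intros A P G1 K; unfold m, v, s, co, e1, e2 in *.
  apply V4_ext; simpl; field; contradict Hv; lra.
Qed.

Lemma curvature_decomposition (t : R) : a < t < b ->
  let n := mnorm (dv (alpha p gam eta) t) in let s := sin (eta t) in
  let X := vsub (dTds (alpha p gam eta) t) (alpha p gam eta t) in
  n ^ 4 * mdot X X / s ^ 2 =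
  kappa_gamma p gam t ^ 2 + (n ^ 3 * mdot (radial_tangent t) X / s ^ 2) ^ 2.
Proof.
  intros Ht n s X.
  assert (Hn2 := mnorm_dalpha_sq t Ht); fold n s in Hn2.
  assert (Hn := mnorm_pos_timelike _ (Htimelike t Ht)); fold n in Hn.
  assert (Hv : n ^ 2 <> 0) by (apply pow_nonzero; lra).
  assert (Hs := sin_eta_neq0 t Ht).
  replace (radial_tangent t) with (alpha_frame t 0 1 0 0)
    by (unfold alpha_frame, comb4; V4_ring).
  unfold X; rewrite dTds_sub_alpha, kappa_gamma_sq, !mdot_alpha_frame by exact Ht.
  replace (n ^ 4) with ((n ^ 2) ^ 2) by ring.
  assert (E : forall y, (n ^ 3 * y / s ^ 2) ^ 2 = (n ^ 2) ^ 3 * y ^ 2 / s ^ 4)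
    by (intro; field; exact Hs).
  rewrite E.
  rewrite Hn2 in Hv |- *; fold s; field; split; [exact Hv | exact Hs].
Qed.

Lemma kappa_g_sq (t : R) : a < t < b ->
  let X := vsub (dTds (alpha p gam eta) t) (alpha p gam eta t) in
  kappa_g (alpha p gam eta) t ^ 2 = mdot X X.
Proof.
  intros Ht X.
  assert (D := curvature_decomposition t Ht); fold X in D.
  assert (Hn := mnorm_pos_timelike _ (Htimelike t Ht)).
  assert (Hs0 := sin_eta_neq0 t Ht).
  assert (Hs : 0 < sin (eta t) ^ 2) by (apply pow2_gt_0, Hs0).
  assert (HXX : 0 <= mdot X X).
  { apply (Rmult_le_reg_l (mnorm (dv (alpha p gam eta) t) ^ 4 / sin (eta t) ^ 2)).
    - apply Rdiv_lt_0_compat; [apply pow_lt|]; assumption.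
    - replace (_ * mdot X X)
        with (mnorm (dv (alpha p gam eta) t) ^ 4 * mdot X X / sin (eta t) ^ 2)
        by (field; exact Hs0).
      rewrite Rmult_0_r, D; apply Rplus_le_le_0_compat; apply pow2_ge_0. }
  unfold kappa_g, mnorm; fold X.
  rewrite pow2_sqrt, Rabs_right by (lra || apply Rabs_pos); reflexivity.
Qed.

Lemma rectifying_defect (t : R) : a < t < b -> 0 < kappa_g (alpha p gam eta) t ->
  let n := mnorm (dv (alpha p gam eta) t) in let s := sin (eta t) in
  let k := kappa_g (alpha p gam eta) t in
  n ^ 4 * k ^ 2 / s ^ 2 = kappa_gamma p gam t ^ 2 +
    (n ^ 3 * k / s ^ 2 * mdot (dv (geod p (gam t)) (eta t)) (N_of (alpha p gam eta) t)) ^ 2.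
Proof.
  intros Ht Hk; cbv zeta.
  assert (D := curvature_decomposition t Ht); cbv zeta in D.
  assert (Hs := sin_eta_neq0 t Ht).
  rewrite kappa_g_sq, D by exact Ht.
  rewrite dv_geod; fold (radial_tangent t); unfold N_of; rewrite mdot_scaler.
  f_equal; field; split; [lra | exact Hs].
Qed.

Hypothesis Hkg : forall t, a < t < b -> 0 < kappa_g (alpha p gam eta) t.

Lemma kappa_gamma_sq_bound (t : R) : a < t < b ->
  kappa_gamma p gam t ^ 2 <=
    mnorm (dv (alpha p gam eta) t) ^ 4 * kappa_g (alpha p gam eta) t ^ 2 / sin (eta t) ^ 2 /\
  (kappa_gamma p gam t ^ 2 =
    mnorm (dv (alpha p gam eta) t) ^ 4 * kappa_g (alpha p gam eta) t ^ 2 / sin (eta t) ^ 2 <->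
   mdot (dv (geod p (gam t)) (eta t)) (N_of (alpha p gam eta) t) = 0).
Proof.
  intros Ht; rewrite (rectifying_defect t Ht (Hkg t Ht)); apply le_add_sq_scaled.
  assert (Hn := mnorm_pos_timelike _ (Htimelike t Ht)).
  assert (Hs := sin_eta_neq0 t Ht).
  assert (Hk := Hkg t Ht).
  apply Rmult_integral_contrapositive_currified; [|apply Rinv_neq_0_compat, pow_nonzero, Hs].
  apply Rmult_integral_contrapositive_currified; [apply pow_nonzero|]; lra.
Qed.

End RectifyingCurve.

Theorem theorem3p5 (p : V4) (gam : R -> V4) (eta : R -> R) (a b : R) :
  a < b ->
  mdot p p = 1 ->
  (* gamma: timelike unit speed curve in S^2_1 ⊂ T_p S^3_1 *)
  (forall t, a < t < b ->
     mdot (gam t) p = 0 /\ mdot (gam t) (gam t) = 1 /\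
     mdot (dv gam t) (dv gam t) = -1) ->
  (forall t, a < t < b -> curve_twice_diff_at gam t /\ twice_diff_at eta t) ->
  (* eta nonzero *)
  (forall t, a < t < b -> eta t <> 0) ->
  (* alpha timelike regular *)
  (forall t, a < t < b ->
     mdot (dv (alpha p gam eta) t) (dv (alpha p gam eta) t) < 0) ->
  (* alpha non-geodesic *)
  (forall t, a < t < b -> 0 < kappa_g (alpha p gam eta) t) ->
  (forall t, a < t < b ->
     (kappa_gamma p gam t) ^ 2 <=
     (mnorm (dv (alpha p gam eta) t)) ^ 4 * (kappa_g (alpha p gam eta) t) ^ 2
       / (sin (eta t)) ^ 2) /\
  ((forall t, a < t < b ->
     (kappa_gamma p gam t) ^ 2 =
     (mnorm (dv (alpha p gam eta) t)) ^ 4 * (kappa_g (alpha p gam eta) t) ^ 2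
       / (sin (eta t)) ^ 2)
   <-> is_rectifying p gam eta a b).
Proof.
  intros _ Hpp Hgam Hdiff _ Htimelike Hkg.
  pose proof (kappa_gamma_sq_bound p gam eta a b Hpp Hgam Hdiff Htimelike Hkg) as Hbound.
  split; [intros t Ht; apply Hbound, Ht|].
  split; intros H t Ht; apply (Hbound t Ht), H, Ht.
Qed.
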